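(* If $g\in\mathcal{G}_0^0\cup\mathcal{G}_0^{sh}$, then for every finite measurable partition $\mathcal{P}$ we have $h(g,\mathcal{P})=C(g)\cdot h(\mathcal{P})$. Here $C(g)=\lim_{x\to0^+}g(x)/\eta(x)$ and $h(\mathcal{P})=h(\eta,\mathcal{P})$ is the Shannon dynamical entropy.
   Context: $\mathcal{G}_0$ is the set of concave functions $g:[0,1]\to\mathbb{R}$ with $g(0)=\lim_{x\to0^+}g(x)=0$. Let $\eta(x)=-x\log x$ and $\eta(0)=0$. Define $\mathcal{G}_0^0=\{g\in\mathcal{G}_0:\lim_{x\to0^+}g(x)/\eta(x)=0\}$ and $\mathcal{G}_0^{sh}=\{g\in\mathcal{G}_0:0<\lim_{x\to0^+}g(x)/\eta(x)<\infty\}$. $T$ is a measure-preserving map of a probability space $(X,\Sigma,\mu)$. For a finite measurable partition $\mathcal{P}$, let $\mathcal{P}_n=\bigvee_{i=0}^{n-1}T^{-i}\mathcal{P}$, $H(g,\mathcal{P})=\sum_{A\in\mathcal{P}}g(\mu(A))$, and $h(g,\mathcal{P})=\limsup_{n\to\infty}\frac1nH(g,\mathcal{P}_n)$. *)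

From Stdlib Require Import Reals Lra List.
Open Scope R_scope.
Import ListNotations.

Definition set (X : Type) := X -> Prop.

Definition preimage {X : Type} (T : X -> X) (A : set X) : set X := fun x => A (T x).

Definition is_sigma_algebra {X : Type} (S : set X -> Prop) : Prop :=
  S (fun _ => True) /\
  (forall A, S A -> S (fun x => ~ A x)) /\
  (forall A : nat -> set X, (forall n, S (A n)) -> S (fun x => exists n, A n x)).

Definition is_prob_measure {X : Type} (S : set X -> Prop) (mu : set X -> R) : Prop :=
  (forall A, S A -> 0 <= mu A) /\
  mu (fun _ => True) = 1 /\
  (forall A : nat -> set X,
      (forall n, S (A n)) ->
      (forall m n x, m <> n -> A m x -> A n x -> False) ->
      Un_cv (fun N => sum_f_R0 (fun n => mu (A n)) N) (mu (fun x => exists n, A n x))).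

Definition measure_preserving {X : Type} (S : set X -> Prop) (mu : set X -> R)
    (T : X -> X) : Prop :=
  forall A, S A -> S (preimage T A) /\ mu (preimage T A) = mu A.

Definition finite_measurable_partition {X : Type} (S : set X -> Prop)
    (P : list (set X)) : Prop :=
  (forall A, In A P -> S A) /\
  (forall i j x, (i < length P)%nat -> (j < length P)%nat -> i <> j ->
      nth i P (fun _ => False) x -> nth j P (fun _ => False) x -> False) /\
  (forall x, exists A, In A P /\ A x).

Fixpoint iterT {X : Type} (T : X -> X) (k : nat) (x : X) : X :=
  match k with O => x | S k' => T (iterT T k' x) end.

(* P_n = P v T^{-1}P v ... v T^{-(n-1)}P (cells A_0 /\ T^{-1}A_1 /\ ...;
   empty cells are allowed and contribute g(0) = 0). P_0 = {X}. *)
Fixpoint refine {X : Type} (T : X -> X) (P : list (set X)) (n : nat) : list (set X) :=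
  match n with
  | O => [fun _ => True]
  | S k => flat_map (fun A => map (fun B => (fun x => A x /\ B (iterT T k x))) P)
                    (refine T P k)
  end.

Definition Hg {X : Type} (mu : set X -> R) (g : R -> R) (P : list (set X)) : R :=
  fold_right (fun A acc => g (mu A) + acc) 0 P.

Definition eta (x : R) : R := if Rle_dec x 0 then 0 else - x * ln x.

Definition concave_on_01 (g : R -> R) : Prop :=
  forall x y t, 0 <= x <= 1 -> 0 <= y <= 1 -> 0 <= t <= 1 ->
    t * g x + (1 - t) * g y <= g (t * x + (1 - t) * y).

Definition in_G0 (g : R -> R) : Prop :=
  concave_on_01 g /\ g 0 = 0 /\
  (forall eps, 0 < eps -> exists delta, 0 < delta /\
     forall x, 0 < x < delta -> Rabs (g x) < eps).

Definition right_limit_at_0 (f : R -> R) (L : R) : Prop :=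
  forall eps, 0 < eps -> exists delta, 0 < delta /\
    forall x, 0 < x < delta -> Rabs (f x - L) < eps.

Definition is_limsup (u : nat -> R) (l : R) : Prop :=
  (forall eps, 0 < eps -> exists N, forall n, (N <= n)%nat -> u n < l + eps) /\
  (forall eps, 0 < eps -> forall N, exists n, (N <= n)%nat /\ l - eps < u n).

Definition hseq {X : Type} (mu : set X -> R) (T : X -> X) (g : R -> R)
    (P : list (set X)) (n : nat) : R :=
  Hg mu g (refine T P n) / INR n.

From Stdlib Require Import Reals Lra Lia List Classical FunctionalExtensionality PropExtensionality.
Open Scope R_scope.

(* Write b_n = H(g,P_n)/n and a_n = H(eta,P_n)/n.  Since g is
   concave with g(0) = 0 and g/eta -> C at 0+, for every eps > 0 there is a
   constant K with
        |g(x) - C eta(x)| <= eps eta(x) + K x      on [0,1]: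
   near 0 this is the limit hypothesis, away from 0 both g and eta are
   squeezed between linear functions (chords of a concave function).
   Summing over the cells of P_n, whose measures add up to 1, gives
        |b_n - C a_n| <= eps a_n + K/n.
   As a_n is nonnegative and eventually bounded (its limsup is finite),
   b_n - C a_n -> 0, so b_n has the same limsup as C a_n, namely C h(P). *)

Lemma set_ext {X : Type} (A B : set X) : (forall x, A x <-> B x) -> A = B.
Proof.
  intros H; apply functional_extensionality; intro x.
  apply propositional_extensionality; auto.
Qed.

Definition sumL {A : Type} (f : A -> R) (L : list A) : R :=
  fold_right (fun a acc => f a + acc) 0 L.

Lemma sumL_app {A : Type} (f : A -> R) L1 L2 : sumL f (L1 ++ L2) = sumL f L1 + sumL f L2.
Proof. induction L1 as [|a L1 IH]; simpl; [ring|]. unfold sumL in *; simpl; rewrite IH; ring. Qed.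

Lemma sumL_flat_map {A B : Type} (f : B -> R) (h : A -> list B) L :
  sumL f (flat_map h L) = sumL (fun a => sumL f (h a)) L.
Proof. induction L as [|a L IH]; simpl; auto. rewrite sumL_app, IH; reflexivity. Qed.

Lemma sumL_ext_in {A : Type} (f f' : A -> R) L :
  (forall a, In a L -> f a = f' a) -> sumL f L = sumL f' L.
Proof.
  induction L as [|a L IH]; intros H; simpl; auto.
  unfold sumL in *; simpl; rewrite H, IH; auto with datatypes.
Qed.

Lemma sumL_lin {A : Type} (f h : A -> R) c d L :
  sumL (fun a => c * f a + d * h a) L = c * sumL f L + d * sumL h L.
Proof. induction L as [|a L IH]; unfold sumL in *; simpl; [ring|]. rewrite IH; ring. Qed.

Lemma sumL_nonneg {A : Type} (f : A -> R) L : (forall a, In a L -> 0 <= f a) -> 0 <= sumL f L.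
Proof.
  induction L as [|a L IH]; intros H; unfold sumL in *; simpl; [lra|].
  assert (0 <= f a) by auto with datatypes.
  assert (0 <= fold_right (fun a0 acc => f a0 + acc) 0 L) by auto with datatypes.
  lra.
Qed.

Lemma sumL_ge_elem {A : Type} (f : A -> R) L a :
  (forall b, In b L -> 0 <= f b) -> In a L -> f a <= sumL f L.
Proof.
  induction L as [|b L IH]; intros H Ha; [destruct Ha|]; unfold sumL in *; simpl.
  destruct Ha as [<-|Ha].
  - assert (0 <= sumL f L) by (apply sumL_nonneg; auto with datatypes).
    unfold sumL in *; lra.
  - assert (0 <= f b) by auto with datatypes.
    assert (f a <= fold_right (fun a0 acc => f a0 + acc) 0 L) by auto with datatypes.
    lra.
Qed.

Lemma sumL_abs_le {A : Type} (f h : A -> R) L :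
  (forall a, In a L -> Rabs (f a) <= h a) -> Rabs (sumL f L) <= sumL h L.
Proof.
  induction L as [|a L IH]; intros H; unfold sumL in *; simpl.
  - rewrite Rabs_R0; lra.
  - pose proof (Rabs_triang (f a) (fold_right (fun a0 acc => f a0 + acc) 0 L)).
    assert (Rabs (f a) <= h a) by auto with datatypes.
    assert (Rabs (fold_right (fun a0 acc => f a0 + acc) 0 L)
            <= fold_right (fun a0 acc => h a0 + acc) 0 L) by auto with datatypes.
    lra.
Qed.

Lemma partial_sums_nth {A : Type} (f : A -> R) (d : A) L N :
  f d = 0 -> (length L <= S N)%nat ->
  sum_f_R0 (fun n => f (nth n L d)) N = sumL f L.
Proof.
  intros Hd. revert N; induction L as [|a L IH]; intros N HN.
  - rewrite sum_eq_R0; [reflexivity|]. intros [|n] _; exact Hd.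
  - destruct N as [|N].
    + destruct L; [|simpl in HN; lia]. unfold sumL; simpl; ring.
    + rewrite decomp_sum by lia.
      change (f a + sum_f_R0 (fun n => f (nth n L d)) N = f a + sumL f L).
      rewrite (IH N) by (simpl in HN; lia). reflexivity.
Qed.

Section MeasureBasics.
Variables (X : Type) (Sigma : set X -> Prop) (mu : set X -> R).
Hypothesis HS : is_sigma_algebra Sigma.

Lemma measurable_empty : Sigma (fun _ => False).
Proof.
  destruct HS as [HT [HC _]].
  replace (fun _ : X => False) with (fun x : X => ~ (fun _ => True) x)
    by (apply set_ext; intro x; tauto).
  apply HC, HT.
Qed.

(* A /\ B is the complement of the countable union  ~A, ~B, ~B, ... *)
Lemma measurable_inter A B : Sigma A -> Sigma B -> Sigma (fun x => A x /\ B x).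
Proof.
  intros HA HB. destruct HS as [_ [HC HU]].
  set (E := fun n : nat => match n with O => fun x => ~ A x | S _ => fun x => ~ B x end).
  replace (fun x => A x /\ B x) with (fun x => ~ (fun y => exists n, E n y) x).
  - apply HC, HU. intros [|n]; apply HC; assumption.
  - apply set_ext; intro x; split.
    + intro H; split; apply NNPP; intro Hn; apply H; [exists O | exists 1%nat]; exact Hn.
    + intros [Ha Hb] [[|n] Hn]; auto.
Qed.

(* T^-k A is measurable: T is measurable since it preserves mu. *)
Lemma measurable_iter_preimage T : measure_preserving Sigma mu T ->
  forall k A, Sigma A -> Sigma (fun x => A (iterT T k x)).
Proof.
  intros HT k; induction k as [|k IH]; intros A HA; simpl.
  - exact HA.
  - apply (IH (preimage T A)), HT, HA.
Qed.

Hypothesis Hmu : is_prob_measure Sigma mu.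

(* mu(empty) = 0: otherwise countably many copies of the empty set would
   have infinite total measure. *)
Lemma measure_empty : mu (fun _ => False) = 0.
Proof.
  destruct Hmu as [Hpos [_ Hadd]].
  set (m := mu (fun _ => False)).
  specialize (Hadd (fun _ _ => False) (fun _ => measurable_empty) (fun _ _ _ _ H _ => H)).
  cbv beta in Hadd.
  replace (fun x : X => exists _ : nat, False) with (fun _ : X => False) in Hadd
    by (apply set_ext; intro x; split; [tauto | intros [_ []]]).
  fold m in Hadd.
  assert (Hm : 0 <= m) by (apply Hpos, measurable_empty).
  destruct Hm as [Hm|Hm]; [|auto].
  (* the partial sums (N+1) m cannot converge to m > 0 *)
  destruct (Hadd m Hm) as [N HN].
  specialize (HN (S N) ltac:(lia)). unfold Rdist in HN.
  rewrite sum_cte, !S_INR in HN.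
  pose proof (pos_INR N).
  replace (m * (INR N + 1 + 1) - m) with (m * (INR N + 1)) in HN by ring.
  rewrite Rabs_right in HN by nra. nra.
Qed.

Lemma finite_additivity (L : list (set X)) :
  (forall A, In A L -> Sigma A) ->
  (forall i j x, (i < length L)%nat -> (j < length L)%nat -> i <> j ->
      nth i L (fun _ => False) x -> nth j L (fun _ => False) x -> False) ->
  mu (fun x => exists A, In A L /\ A x) = sumL mu L.
Proof.
  intros Hmeas Hdisj. destruct Hmu as [_ [_ Hadd]].
  set (E := fun n => nth n L (fun _ : X => False)).
  assert (HE : forall n x, E n x -> (n < length L)%nat).
  { intros n x Hx. destruct (Nat.lt_ge_cases n (length L)) as [|Hn]; auto.
    unfold E in Hx; rewrite nth_overflow in Hx by exact Hn; destruct Hx. }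
  specialize (Hadd E).
  replace (fun x => exists n, E n x) with (fun x => exists A, In A L /\ A x) in Hadd.
  - eapply UL_sequence; [apply Hadd|].
    + intro n; destruct (Nat.lt_ge_cases n (length L)) as [Hn|Hn]; unfold E.
      * apply Hmeas, nth_In, Hn.
      * rewrite nth_overflow by exact Hn; apply measurable_empty.
    + intros m n x Hmn Hm Hn; exact (Hdisj m n x (HE _ _ Hm) (HE _ _ Hn) Hmn Hm Hn).
    + intros e He; exists (length L); intros N HN.
      unfold E; rewrite (partial_sums_nth mu) by (apply measure_empty || lia).
      unfold Rdist; rewrite Rminus_diag, Rabs_R0; exact He.
  - apply set_ext; intro x; split.
    + intros [A [HA Hx]]. destruct (In_nth L A (fun _ => False) HA) as [n [_ Hn]].
      exists n; unfold E; rewrite Hn; exact Hx.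
    + intros [n Hn]. exists (E n); split; [apply nth_In, (HE _ _ Hn) | exact Hn].
Qed.

End MeasureBasics.

Section RefinementCells.
Variables (X : Type) (Sigma : set X -> Prop) (mu : set X -> R) (T : X -> X)
  (P : list (set X)).
Hypotheses (HS : is_sigma_algebra Sigma) (Hmu : is_prob_measure Sigma mu)
  (HT : measure_preserving Sigma mu T) (HP : finite_measurable_partition Sigma P).

Lemma refine_measurable n A : In A (refine T P n) -> Sigma A.
Proof.
  destruct HP as [HPmeas _]. revert A; induction n as [|n IH]; simpl; intros A HA.
  - destruct HA as [<-|[]]. apply HS.
  - apply in_flat_map in HA; destruct HA as [A0 [HA0 HA]].
    apply in_map_iff in HA; destruct HA as [B [<- HB]].
    apply (measurable_inter _ _ HS); auto. apply (measurable_iter_preimage _ _ mu T); auto.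
Qed.

Lemma split_cell_measure n A : In A (refine T P n) ->
  sumL mu (map (fun B x => A x /\ B (iterT T n x)) P) = mu A.
Proof.
  intros HA. destruct HP as [HPmeas [HPdisj HPcover]].
  set (split := fun (B : set X) x => A x /\ B (iterT T n x)).
  rewrite <- (finite_additivity X Sigma mu HS Hmu).
  - f_equal; apply set_ext; intro x; split.
    + intros [C [HC Hx]]. apply in_map_iff in HC; destruct HC as [B [<- _]]. apply Hx.
    + intros Hx. destruct (HPcover (iterT T n x)) as [B [HB HBx]].
      exists (split B); split; [apply in_map_iff; exists B; auto | split; auto].
  - intros C HC. apply in_map_iff in HC; destruct HC as [B [<- HB]].
    apply (measurable_inter _ _ HS); [apply (refine_measurable n), HA|].
    apply (measurable_iter_preimage _ _ mu T); auto.
  - intros i j x Hi Hj Hij.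
    rewrite (nth_indep _ _ (split (fun _ => False)) Hi),
            (nth_indep _ _ (split (fun _ => False)) Hj), !map_nth.
    rewrite length_map in Hi, Hj. intros [_ Hxi] [_ Hxj].
    exact (HPdisj i j (iterT T n x) Hi Hj Hij Hxi Hxj).
Qed.

Lemma refine_total_mass n : sumL mu (refine T P n) = 1.
Proof.
  induction n as [|n IH]; simpl.
  - destruct Hmu as [_ [Htot _]]. unfold sumL; simpl. rewrite Htot; ring.
  - rewrite sumL_flat_map, <- IH. apply sumL_ext_in; intros A HA.
    apply split_cell_measure, HA.
Qed.

Lemma refine_cell_measure n A : In A (refine T P n) -> 0 <= mu A <= 1.
Proof.
  destruct Hmu as [Hpos _].
  intros HA; split; [apply Hpos, (refine_measurable n), HA|].
  rewrite <- (refine_total_mass n). apply sumL_ge_elem; [|exact HA].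
  intros B HB; apply Hpos, (refine_measurable n), HB.
Qed.

End RefinementCells.

Lemma eta_pos x : 0 < x -> eta x = - x * ln x.
Proof. intros H. unfold eta. destruct (Rle_dec x 0); [lra | reflexivity]. Qed.

Lemma ln_neg x : 0 < x < 1 -> ln x < 0.
Proof. intros H. rewrite <- ln_1. apply ln_increasing; lra. Qed.

Lemma eta_nonneg x : x <= 1 -> 0 <= eta x.
Proof.
  intros H. unfold eta. destruct (Rle_dec x 0); [lra|].
  destruct (Req_dec x 1) as [->|Hx1]; [rewrite ln_1; lra|].
  pose proof (ln_neg x ltac:(lra)). nra.
Qed.

Lemma eta_gt0 x : 0 < x < 1 -> 0 < eta x.
Proof. intros H. rewrite eta_pos by lra. pose proof (ln_neg x H). nra. Qed.

Lemma eta_le_linear d x : 0 < d <= x -> eta x <= x * (- ln d).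
Proof.
  intros H. rewrite eta_pos by lra.
  assert (ln d <= ln x).
  { destruct (Req_dec d x) as [->|Hne]; [lra|]. left; apply ln_increasing; lra. }
  nra.
Qed.

Section ConcaveChords.
Variable g : R -> R.
Hypotheses (Hconc : concave_on_01 g) (Hg0 : g 0 = 0).

Lemma concave_above_chord x : 0 <= x <= 1 -> x * g 1 <= g x.
Proof.
  intros Hx. pose proof (Hconc 1 0 x ltac:(lra) ltac:(lra) Hx) as H.
  rewrite Hg0 in H. replace (x * 1 + (1 - x) * 0) with x in H by ring. lra.
Qed.

Lemma concave_below_secant d x : 0 < d <= x -> x <= 1 -> g x <= x / d * g d.
Proof.
  intros Hd Hx1.
  assert (Ht : 0 <= d / x <= 1).
  { split; [apply Rlt_le, Rdiv_lt_0_compat; lra|].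
    apply (Rmult_le_reg_r x); [lra|].
    unfold Rdiv; rewrite Rmult_assoc, Rinv_l by lra. lra. }
  pose proof (Hconc x 0 (d / x) ltac:(lra) ltac:(lra) Ht) as H.
  rewrite Hg0 in H. replace (d / x * x + (1 - d / x) * 0) with d in H by (field; lra).
  replace (g x) with (x / d * (d / x * g x)) by (field; lra).
  apply Rmult_le_compat_l; [apply Rlt_le, Rdiv_lt_0_compat|]; lra.
Qed.

Lemma comparison_with_eta C : 0 <= C -> right_limit_at_0 (fun x => g x / eta x) C ->
  forall eps, 0 < eps -> exists K, forall x, 0 <= x <= 1 ->
    Rabs (g x - C * eta x) <= eps * eta x + K * x.
Proof.
  intros HC Hlim eps Heps. destruct (Hlim eps Heps) as [d [Hd Hnear]].
  set (d' := Rmin d (1/2)).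
  assert (Hd' : 0 < d' <= 1/2) by (split; [apply Rmin_pos | apply Rmin_r]; lra).
  assert (Hd'd : d' <= d) by apply Rmin_l.
  pose proof (ln_neg d' ltac:(lra)) as Hlnd.
  set (K := Rabs (g d') / d' + Rabs (g 1) + C * (- ln d')).
  assert (HK1 : 0 <= Rabs (g d') / d') by (apply Rmult_le_pos; [apply Rabs_pos | apply Rlt_le, Rinv_0_lt_compat; lra]).
  pose proof (Rabs_pos (g 1)) as HK2.
  assert (HK3 : 0 <= C * (- ln d')) by nra.
  exists K; intros x Hx.
  pose proof (eta_nonneg x ltac:(lra)) as Heta.
  destruct (Rle_lt_or_eq_dec 0 x (proj1 Hx)) as [Hxpos|<-].
  2: { rewrite Hg0. unfold eta. destruct (Rle_dec 0 0); [|lra].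
       rewrite Rmult_0_r, Rminus_0_r, Rabs_R0. lra. }
  destruct (Rlt_or_le x d') as [Hsmall|Hlarge].
  - (* near 0: the limit hypothesis, multiplied by eta x > 0 *)
    pose proof (eta_gt0 x ltac:(lra)) as Hetapos.
    replace (g x - C * eta x) with ((g x / eta x - C) * eta x) by (field; lra).
    rewrite Rabs_mult, (Rabs_right (eta x)) by lra.
    pose proof (Hnear x ltac:(lra)). unfold K. nra.
  - (* away from 0: g and C eta are both within K x of 0 *)
    pose proof (concave_above_chord x Hx) as Hlow.
    pose proof (concave_below_secant d' x ltac:(lra) ltac:(lra)) as Hup.
    pose proof (eta_le_linear d' x ltac:(lra)) as Hetaup.
    pose proof (Rle_abs (g d')) as Hgd. pose proof (Rle_abs (- g 1)) as Hg1.
    rewrite Rabs_Ropp in Hg1.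
    assert (x / d' * g d' <= x * (Rabs (g d') / d')).
    { replace (x * (Rabs (g d') / d')) with (x / d' * Rabs (g d')) by (field; lra).
      apply Rmult_le_compat_l; [apply Rlt_le, Rdiv_lt_0_compat|]; lra. }
    assert (0 <= C * eta x <= C * (x * (- ln d'))) by (split; nra).
    apply Rabs_le; unfold K; split; nra.
Qed.

End ConcaveChords.

Lemma Hg_sumL {X : Type} (mu : set X -> R) f Q : Hg mu f Q = sumL (fun A => f (mu A)) Q.
Proof. reflexivity. Qed.

Lemma entropy_comparison {X : Type} (mu : set X -> R) g C eps K (Q : list (set X)) :
  (forall x, 0 <= x <= 1 -> Rabs (g x - C * eta x) <= eps * eta x + K * x) ->
  (forall A, In A Q -> 0 <= mu A <= 1) -> sumL mu Q = 1 ->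
  Rabs (Hg mu g Q - C * Hg mu eta Q) <= eps * Hg mu eta Q + K.
Proof.
  intros Hpt Hcells Hmass. rewrite !Hg_sumL.
  replace (sumL (fun A => g (mu A)) Q - C * sumL (fun A => eta (mu A)) Q)
    with (sumL (fun A => 1 * g (mu A) + (- C) * eta (mu A)) Q) by (rewrite sumL_lin; ring).
  replace (eps * sumL (fun A => eta (mu A)) Q + K)
    with (sumL (fun A => eps * eta (mu A) + K * mu A) Q) by (rewrite sumL_lin, Hmass; ring).
  apply sumL_abs_le; intros A HA.
  replace (1 * g (mu A) + - C * eta (mu A)) with (g (mu A) - C * eta (mu A)) by ring.
  apply Hpt, Hcells, HA.
Qed.

Lemma inv_INR_eventually_small K e : 0 < e ->
  exists N, forall n, (N <= n)%nat -> K / INR n < e.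
Proof.
  intros He. destruct (INR_archimed e (Rabs K) He) as [m Hm].
  exists (S m); intros n Hn.
  assert (INR m < INR n) by (apply lt_INR; lia).
  pose proof (pos_INR m). pose proof (Rle_abs K).
  apply (Rmult_lt_reg_r (INR n)); [lra|].
  unfold Rdiv; rewrite Rmult_assoc, Rinv_l by lra. nra.
Qed.

Lemma limsup_scale (a : nat -> R) l C : 0 <= C ->
  is_limsup a l -> is_limsup (fun n => C * a n) (C * l).
Proof.
  intros HC [Hup Hfreq].
  assert (Hsmall : forall eps, 0 < eps -> 0 < eps / (C + 1) /\ C * (eps / (C + 1)) < eps).
  { intros eps Heps. assert (0 < eps / (C + 1)) by (apply Rdiv_lt_0_compat; lra).
    split; [assumption|].
    replace (C * (eps / (C + 1))) with (eps - eps / (C + 1)) by (field; lra). lra. }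
  split.
  - intros eps Heps. destruct (Hsmall eps Heps) as [Hd HCd].
    destruct (Hup _ Hd) as [N HN]. exists N; intros n Hn.
    specialize (HN n Hn). nra.
  - intros eps Heps N. destruct (Hsmall eps Heps) as [Hd HCd].
    destruct (Hfreq _ Hd N) as [n [Hn Han]]. exists n; split; [exact Hn | nra].
Qed.

Lemma Rabs_le_bounds x e : Rabs x <= e -> - e <= x <= e.
Proof.
  intros H. pose proof (Rle_abs x). pose proof (Rle_abs (- x)).
  rewrite Rabs_Ropp in *. lra.
Qed.

Lemma limsup_perturb (a b : nat -> R) l : is_limsup a l ->
  (forall e, 0 < e -> exists N, forall n, (N <= n)%nat -> Rabs (b n - a n) <= e) ->
  is_limsup b l.
Proof.
  intros [Hup Hfreq] Hclose. split.
  - intros eps Heps.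
    destruct (Hup (eps / 2) ltac:(lra)) as [N1 HN1].
    destruct (Hclose (eps / 2) ltac:(lra)) as [N2 HN2].
    exists (max N1 N2); intros n Hn.
    specialize (HN1 n ltac:(lia)). specialize (HN2 n ltac:(lia)).
    apply Rabs_le_bounds in HN2. lra.
  - intros eps Heps N.
    destruct (Hclose (eps / 2) ltac:(lra)) as [N2 HN2].
    destruct (Hfreq (eps / 2) ltac:(lra) (max N N2)) as [n [Hn Han]].
    exists n; split; [lia|].
    specialize (HN2 n ltac:(lia)). apply Rabs_le_bounds in HN2. lra.
Qed.

Lemma relative_error_vanishes (a d : nat -> R) M N0 :
  (forall n, (N0 <= n)%nat -> 0 <= a n <= M) ->
  (forall eps, 0 < eps -> exists K, forall n, (N0 <= n)%nat ->
      Rabs (d n) <= eps * a n + K / INR n) ->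
  forall e, 0 < e -> exists N, forall n, (N <= n)%nat -> Rabs (d n) <= e.
Proof.
  intros Hbound Hrel e He.
  set (eps := e / (2 * (Rabs M + 1))).
  pose proof (Rabs_pos M) as HM. pose proof (Rle_abs M).
  assert (Heps : 0 < eps) by (apply Rdiv_lt_0_compat; lra).
  assert (HepsM : eps * (Rabs M + 1) = e / 2) by (unfold eps; field; lra).
  destruct (Hrel eps Heps) as [K HK].
  destruct (inv_INR_eventually_small K (e / 2) ltac:(lra)) as [N HN].
  exists (max N0 N); intros n Hn.
  specialize (HK n ltac:(lia)). specialize (HN n ltac:(lia)).
  specialize (Hbound n ltac:(lia)).
  assert (eps * a n <= eps * (Rabs M + 1)) by (apply Rmult_le_compat_l; lra).
  lra.
Qed.

Section EntropySequences.
Variables (X : Type) (mu : set X -> R) (T : X -> X) (P : list (set X)).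

Lemma hseq_eta_nonneg n : (1 <= n)%nat ->
  (forall A, In A (refine T P n) -> 0 <= mu A <= 1) -> 0 <= hseq mu T eta P n.
Proof.
  intros Hn Hcells. unfold hseq. rewrite Hg_sumL.
  apply Rmult_le_pos; [|apply Rlt_le, Rinv_0_lt_compat, lt_0_INR; lia].
  apply sumL_nonneg; intros A HA. apply eta_nonneg, Hcells, HA.
Qed.

Lemma hseq_comparison g C eps K n : (1 <= n)%nat ->
  (forall x, 0 <= x <= 1 -> Rabs (g x - C * eta x) <= eps * eta x + K * x) ->
  (forall A, In A (refine T P n) -> 0 <= mu A <= 1) -> sumL mu (refine T P n) = 1 ->
  Rabs (hseq mu T g P n - C * hseq mu T eta P n) <= eps * hseq mu T eta P n + K / INR n.
Proof.
  intros Hn Hpt Hcells Hmass. unfold hseq.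
  assert (Hinv : 0 < / INR n) by (apply Rinv_0_lt_compat, lt_0_INR; lia).
  pose proof (entropy_comparison mu g C eps K _ Hpt Hcells Hmass) as Hcomp.
  unfold Rdiv.
  replace (Hg mu g (refine T P n) * / INR n - C * (Hg mu eta (refine T P n) * / INR n))
    with ((Hg mu g (refine T P n) - C * Hg mu eta (refine T P n)) * / INR n) by ring.
  replace (eps * (Hg mu eta (refine T P n) * / INR n) + K * / INR n)
    with ((eps * Hg mu eta (refine T P n) + K) * / INR n) by ring.
  rewrite Rabs_mult, (Rabs_right (/ INR n)) by lra.
  apply Rmult_le_compat_r; lra.
Qed.

End EntropySequences.

Theorem mainTheorem5 (X : Type) (S : set X -> Prop) (mu : set X -> R) (T : X -> X)
  (g : R -> R) (C : R) :
  is_sigma_algebra S ->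
  is_prob_measure S mu ->
  measure_preserving S mu T ->
  in_G0 g ->
  0 <= C ->
  right_limit_at_0 (fun x => g x / eta x) C ->
  forall P : list (set X), finite_measurable_partition S P ->
  forall hP : R, is_limsup (hseq mu T eta P) hP ->
  is_limsup (hseq mu T g P) (C * hP).
Proof.
  intros HS Hmu HT [Hconc [Hg0 _]] HC Hlim P HP hP HhP.
  pose proof (refine_cell_measure X S mu T P HS Hmu HT HP) as Hcells.
  pose proof (refine_total_mass X S mu T P HS Hmu HT HP) as Hmass.
  (* b_n = (1/n) H(g, P_n) stays close to C a_n, a_n = (1/n) H(eta, P_n) *)
  apply limsup_perturb with (a := fun n => C * hseq mu T eta P n);
    [apply limsup_scale; assumption|].
  (* a_n is eventually in [0, hP + 1] *)
  destruct (proj1 HhP 1 Rlt_0_1) as [N1 HN1].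
  apply (relative_error_vanishes (hseq mu T eta P) _ (hP + 1) (max 1 N1)).
  - intros n Hn. split.
    + apply hseq_eta_nonneg; [lia | apply Hcells].
    + apply Rlt_le, HN1; lia.
  - intros eps Heps.
    destruct (comparison_with_eta g Hconc Hg0 C HC Hlim eps Heps) as [K HK].
    exists K; intros n Hn. apply hseq_comparison; [lia | exact HK | apply Hcells | apply Hmass].
Qed.
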